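(* For $F\in(0,1]$, $k\in(0,1)$, real $d\ge 2$ and integer $n\ge 1$, let $G=k^{n-1}F$ and $$C_{\mathrm{dp}}(F,d,n,k)=\frac{(1-G)\,(4^{nd}G+2^{nd}-2)}{\big[(2^{nd}-2)G+1\big](2^{nd}-1)}.$$ If $F>2^{-d}$ and $k>2^{-d}$, then, for every $n\ge1$, $C_{\mathrm{dp}}$ is monotonically non-increasing as each of $F$, $d$ and $k$ increases (the other variables held fixed), i.e. $\partial_F C_{\mathrm{dp}}\le 0$, $\partial_d C_{\mathrm{dp}}\le 0$ and $\partial_k C_{\mathrm{dp}}\le 0$ at every such point.
   Context: Interpretation: for integers $d,n$, $C_{\mathrm{dp}}(F,d,n,k)$ equals $\sum_s\frac{4\lambda^+_s\lambda^-_s}{\lambda^+_s+\lambda^-_s}$ computed from the eigenvalues of the $nd$-qubit depolarized GHZ state $G|\mathrm{GHZ}_{nd}\rangle\langle\mathrm{GHZ}_{nd}|+\frac{1-G}{2^{nd}-1}(I-|\mathrm{GHZ}_{nd}\rangle\langle\mathrm{GHZ}_{nd}|)$ in the GHZ basis $|G^\pm_s\rangle=(|s\rangle\pm|\bar s\rangle)/\sqrt2$ (sum over one representative $s$ of each complementary pair of bit strings), i.e. a state whose fidelity $k^{n-1}F$ models imperfect local extension of a $d$-qubit GHZ state of fidelity $F$ to $n$ qubits per node with per-step quality $k$. *)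

From Stdlib Require Import Reals.
From Coquelicot Require Import Coquelicot.
Open Scope R_scope.

Definition Gfid (F : R) (n : nat) (k : R) : R := k ^ (n - 1) * F.

Definition Cdp (F d : R) (n : nat) (k : R) : R :=
  let G := Gfid F n k in
  let N := Rpower 2 (INR n * d) in
  (1 - G) * (Rpower 4 (INR n * d) * G + N - 2)
  / (((N - 2) * G + 1) * (N - 1)).

(* With N = 2^(nd) and G = k^(n-1) F we have 4^(nd) = N^2, so C_dp is the rational
   function c(N, G) = (1-G)(N^2 G + N - 2) / (((N-2)G + 1)(N - 1)), with
     dc/dG = -(NG-1)(N(N-2)G + 3N - 2) / (((N-2)G+1)^2 (N-1)),
     dc/dN = -(1-G)(NG-1)((3N-4)G + 1) / (((N-2)G+1)^2 (N-1)^2).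
   Both are nonpositive once N >= 2, 0 <= G <= 1 and NG >= 1, and F, k > 2^(-d) gives
   G > 2^(-nd), i.e. NG > 1.  Since F, d, k enter only through G and N, which are
   nondecreasing in each of them, the chain rule concludes. *)

From Stdlib Require Import Reals Lra Lia.
From Coquelicot Require Import Coquelicot.
Open Scope R_scope.

Definition has_nonpos_derive (f : R -> R) (x : R) : Prop :=
  exists l, is_derive f x l /\ l <= 0.

Definition has_nonneg_derive (f : R -> R) (x : R) : Prop :=
  exists l, is_derive f x l /\ 0 <= l.

Lemma comp_has_nonpos_derive (f h g : R -> R) (x : R) :
  has_nonpos_derive h (g x) -> has_nonneg_derive g x ->
  (forall t, f t = h (g t)) ->
  ex_derive f x /\ Derive f x <= 0.
Proof.
  intros [dh [Hh Hdh]] [dg [Hg Hdg]] Hf.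
  assert (Hfx : is_derive f x (dg * dh)).
  { apply (is_derive_ext (fun t => h (g t))); [intro t; now rewrite Hf|].
    exact (is_derive_comp h g x dh dg Hh Hg). }
  split; [now exists (dg * dh)|].
  rewrite (is_derive_unique f x _ Hfx). nra.
Qed.

Lemma Rpower4 (y : R) : Rpower 4 y = Rpower 2 y ^ 2.
Proof.
  unfold Rpower. simpl. rewrite Rmult_1_r, <- exp_plus. f_equal.
  replace 4 with (2 * 2) by lra. rewrite ln_mult by lra. ring.
Qed.

Definition cdp_core (N G : R) : R :=
  (1 - G) * (N ^ 2 * G + N - 2) / (((N - 2) * G + 1) * (N - 1)).

Lemma Cdp_core (F d k : R) (n : nat) :
  Cdp F d n k = cdp_core (Rpower 2 (INR n * d)) (Gfid F n k).
Proof. unfold Cdp, cdp_core. now rewrite Rpower4. Qed.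

Lemma cdp_core_nonpos_derive_G (N G : R) :
  2 <= N -> 0 <= G -> 1 <= N * G -> has_nonpos_derive (cdp_core N) G.
Proof.
  intros HN HG HNG.
  assert (Hden : 0 < ((N - 2) * G + 1) ^ 2 * (N - 1))
    by (apply Rmult_lt_0_compat; [apply pow_lt|]; nra).
  exists (- ((N * G - 1) * (N * (N - 2) * G + 3 * N - 2))
          / (((N - 2) * G + 1) ^ 2 * (N - 1))).
  split.
  - unfold cdp_core. auto_derive; [nra|]. field. nra.
  - assert (0 <= (N * G - 1) * (N * (N - 2) * G + 3 * N - 2))
      by (apply Rmult_le_pos; nra).
    unfold Rdiv. assert (0 < / (((N - 2) * G + 1) ^ 2 * (N - 1)))
      by now apply Rinv_0_lt_compat.
    nra.
Qed.

Lemma cdp_core_nonpos_derive_N (N G : R) :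
  2 <= N -> 0 <= G <= 1 -> 1 <= N * G ->
  has_nonpos_derive (fun M => cdp_core M G) N.
Proof.
  intros HN HG HNG.
  assert (Hden : 0 < ((N - 2) * G + 1) ^ 2 * (N - 1) ^ 2)
    by (apply Rmult_lt_0_compat; apply pow_lt; nra).
  exists ((1 - G) * (- (N * G - 1) * ((3 * N - 4) * G + 1))
          / (((N - 2) * G + 1) ^ 2 * (N - 1) ^ 2)).
  split.
  - unfold cdp_core. auto_derive; [nra|]. field. nra.
  - assert (0 <= (1 - G) * ((N * G - 1) * ((3 * N - 4) * G + 1)))
      by (apply Rmult_le_pos; [|apply Rmult_le_pos]; nra).
    unfold Rdiv. assert (0 < / (((N - 2) * G + 1) ^ 2 * (N - 1) ^ 2))
      by now apply Rinv_0_lt_compat.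
    nra.
Qed.

Lemma Gfid_nonneg_derive_F (F k : R) (n : nat) :
  0 <= k -> has_nonneg_derive (fun x => Gfid x n k) F.
Proof.
  intro Hk. exists (k ^ (n - 1)). split.
  - unfold Gfid. auto_derive; [exact I | ring].
  - now apply pow_le.
Qed.

Lemma Gfid_nonneg_derive_k (F k : R) (n : nat) :
  0 <= F -> 0 <= k -> has_nonneg_derive (fun x => Gfid F n x) k.
Proof.
  intros HF Hk. exists (INR (n - 1) * k ^ pred (n - 1) * F). split.
  - unfold Gfid. auto_derive; [exact I | ring].
  - apply Rmult_le_pos; [apply Rmult_le_pos; [apply pos_INR | now apply pow_le]|lra].
Qed.

Lemma Rpower_nonneg_derive (a c x : R) :
  1 <= a -> 0 <= c -> has_nonneg_derive (fun t => Rpower a (c * t)) x.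
Proof.
  intros Ha Hc. exists (c * ln a * Rpower a (c * x)). split.
  - unfold Rpower. auto_derive; [exact I | ring].
  - assert (0 <= ln a) by (rewrite <- ln_1; apply ln_le; lra).
    assert (0 < Rpower a (c * x)) by apply exp_pos.
    apply Rmult_le_pos; [apply Rmult_le_pos|]; lra.
Qed.

Lemma Gfid_bounds (F k : R) (n : nat) :
  0 < F <= 1 -> 0 < k <= 1 -> 0 < Gfid F n k <= 1.
Proof.
  intros HF Hk. unfold Gfid.
  assert (0 < k ^ (n - 1)) by (apply pow_lt; lra).
  assert (k ^ (n - 1) <= 1) by (rewrite <- (pow1 (n - 1)); apply pow_incr; lra).
  split; nra.
Qed.

Lemma pow_lt_Gfid (a F k : R) (n : nat) :
  (1 <= n)%nat -> 0 < a -> a < F -> a < k -> a ^ n < Gfid F n k.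
Proof.
  intros Hn Ha HF Hk. unfold Gfid.
  replace (a ^ n) with (a ^ (n - 1) * a) by (replace n with (S (n - 1)) at 2 by lia; simpl; ring).
  assert (0 < a ^ (n - 1)) by now apply pow_lt.
  assert (a ^ (n - 1) <= k ^ (n - 1)) by (apply pow_incr; lra).
  nra.
Qed.

Lemma Rpower_mul_pow_opp (a d : R) (n : nat) :
  0 < a -> Rpower a (INR n * d) * Rpower a (- d) ^ n = 1.
Proof.
  intro Ha.
  rewrite <- Rpower_pow, Rpower_mult, <- Rpower_plus by apply exp_pos.
  replace (INR n * d + - d * INR n) with 0 by ring. apply Rpower_O; lra.
Qed.

Lemma two_le_Rpower2 (y : R) : 1 <= y -> 2 <= Rpower 2 y.
Proof.
  intro Hy. rewrite <- (Rpower_1 2) at 1 by lra. apply Rle_Rpower; lra.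
Qed.

Theorem proposition3 (F d k : R) (n : nat) :
  0 < F <= 1 -> 0 < k < 1 -> 2 <= d -> (1 <= n)%nat ->
  Rpower 2 (- d) < F -> Rpower 2 (- d) < k ->
  (ex_derive (fun x => Cdp x d n k) F /\ Derive (fun x => Cdp x d n k) F <= 0) /\
  (ex_derive (fun x => Cdp F x n k) d /\ Derive (fun x => Cdp F x n k) d <= 0) /\
  (ex_derive (fun x => Cdp F d n x) k /\ Derive (fun x => Cdp F d n x) k <= 0).
Proof.
  intros HF Hk Hd Hn HaF Hak.
  assert (HnR : 1 <= INR n) by exact (le_INR 1 n Hn).
  set (N := Rpower 2 (INR n * d)).
  set (G := Gfid F n k).
  assert (HN : 2 <= N) by (apply two_le_Rpower2; nra).
  assert (HG : 0 < G <= 1) by (apply Gfid_bounds; lra).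
  assert (HNG : 1 <= N * G).
  { assert (Ha : 0 < Rpower 2 (- d)) by apply exp_pos.
    rewrite <- (Rpower_mul_pow_opp 2 d n) by lra.
    apply Rmult_le_compat_l; [lra|].
    now apply Rlt_le, pow_lt_Gfid. }
  split; [|split].
  - apply (comp_has_nonpos_derive _ (cdp_core N) (fun x => Gfid x n k)).
    + apply cdp_core_nonpos_derive_G; fold G; lra.
    + apply Gfid_nonneg_derive_F; lra.
    + intro t. apply Cdp_core.
  - apply (comp_has_nonpos_derive _ (fun M => cdp_core M G) (fun x => Rpower 2 (INR n * x))).
    + apply cdp_core_nonpos_derive_N; fold N; lra.
    + apply Rpower_nonneg_derive; lra.
    + intro t. apply Cdp_core.
  - apply (comp_has_nonpos_derive _ (cdp_core N) (fun x => Gfid F n x)).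
    + apply cdp_core_nonpos_derive_G; fold G; lra.
    + apply Gfid_nonneg_derive_k; lra.
    + intro t. apply Cdp_core.
Qed.
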